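(* Let $G$ be a strongly connected directed multigraph with a designated set of ordinary vertices such that every two distinct ordinary vertices are $(k+1)$-edge-connected, and let $s$ be a fixed ordinary vertex. Let $u$ and $w$ be two ordinary vertices that are not $(k+2)$-edge-connected. Then either $M(u)\neq M(w)$, or $M_R(u)\neq M_R(w)$.
   Context: For a vertex set $S$, $\mathit{out}(S)$ is the number of edges leaving $S$; $S$ is a $j$-out set if $\mathit{out}(S)=j$. For vertices $x,y$, $\lambda(x,y)$ is the minimum of $\mathit{out}(S)$ over vertex sets $S$ with $x\in S$, $y\notin S$. Two vertices $x,y$ are $j$-edge-connected if $\lambda(x,y)\ge j$ and $\lambda(y,x)\ge j$. For a vertex $v$ with $\lambda(v,s)\ge k+1$: if there is a $(k+1)$-out set $S$ with $v\in S$, $s\notin S$, then $M(v)$ denotes the inclusion-wise minimum such $(k+1)$-out set (it exists); otherwise $M(v)=\bot$. $M_R(v)$ denotes the same notion defined in the reverse graph $G^R$ (all edges reversed). *)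

From mathcomp Require Import all_boot.
Set Implicit Arguments. Unset Strict Implicit. Unset Printing Implicit Defensive.

(* A directed multigraph on a finite vertex type V is given by its edge
   multiplicity function: [g x y] = number of parallel edges x -> y. *)
Definition mgraph (V : finType) := V -> V -> nat.

Definition rev_graph (V : finType) (g : mgraph V) : mgraph V := fun x y => g y x.

Definition out (V : finType) (g : mgraph V) (S : {set V}) : nat :=
  \sum_(x in S) \sum_(y in ~: S) g x y.

Definition strongly_connected (V : finType) (g : mgraph V) : Prop :=
  forall x y : V, connect (fun a b => 0 < g a b) x y.

Definition lambda_ge (V : finType) (g : mgraph V) (x y : V) (j : nat) : Prop :=
  forall S : {set V}, x \in S -> y \notin S -> j <= out g S.

Definition edge_conn (V : finType) (g : mgraph V) (j : nat) (x y : V) : Prop :=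
  lambda_ge g x y j /\ lambda_ge g y x j.

Definition sep_out (V : finType) (g : mgraph V) (k : nat) (s v : V)
  (S : {set V}) : bool :=
  [&& v \in S, s \notin S & out g S == k.+1].

(* M(v): the inclusion-wise minimum (k+1)-out set containing v and not s,
   or None (= bottom) if there is none. *)
Definition Mset (V : finType) (g : mgraph V) (k : nat) (s v : V)
  : option {set V} :=
  [pick S : {set V} | sep_out g k s v S &&
     [forall T : {set V}, sep_out g k s v T ==> (S \subset T)]].

Definition MRset (V : finType) (g : mgraph V) (k : nat) (s v : V)
  : option {set V} := Mset (rev_graph g) k s v.

From mathcomp Require Import all_boot.
From mathcomp Require Import zify.
Set Implicit Arguments. Unset Strict Implicit. Unset Printing Implicit Defensive.

(* Since u and w are not (k+2)-edge-connected but are (k+1)-edge-connected,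
   some (k+1)-out set S contains one of them, say u, and avoids the other.
   If s is outside S, then M(u) is contained in S (by submodularity of out,
   the (k+1)-out sets containing u and avoiding s are closed under
   intersection), so w lies in M(w) but not in M(u).  If s is in S, the
   complement of S is a (k+1)-out set of the reverse graph containing w and
   avoiding u and s, and the same argument separates M_R(w) from M_R(u). *)

Lemma outE (V : finType) (g : mgraph V) (S : {set V}) :
  out g S = \sum_x \sum_y ((x \in S) && (y \notin S)) * g x y.
Proof.
rewrite /out big_mkcond /=; apply: eq_bigr => x _.
case: (x \in S) => /=; last by rewrite big1 // => y _; rewrite mul0n.
rewrite big_mkcond /=; apply: eq_bigr => y _; rewrite in_setC.
by case: (y \in S); rewrite ?mul1n.
Qed.

Lemma out_submod (V : finType) (g : mgraph V) (A B : {set V}) :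
  out g (A :&: B) + out g (A :|: B) <= out g A + out g B.
Proof.
rewrite !outE -!big_split /=; apply: leq_sum => x _.
rewrite -!big_split /=; apply: leq_sum => y _; rewrite !inE.
by case: (x \in A); case: (x \in B); case: (y \in A); case: (y \in B) => /=; lia.
Qed.

Lemma out_rev (V : finType) (g : mgraph V) (S : {set V}) :
  out (rev_graph g) S = out g (~: S).
Proof.
rewrite /out /rev_graph exchange_big /=.
by apply: eq_bigr => x _; rewrite setCK.
Qed.

Lemma lambda_geP (V : finType) (g : mgraph V) (x y : V) (j : nat) :
  reflect (lambda_ge g x y j)
          [forall S : {set V}, (x \in S) ==> (y \notin S) ==> (j <= out g S)].
Proof.
apply: (iffP forallP) => [h S xS yS | h S]; first by have := h S; rewrite xS yS.
by apply/implyP => xS; apply/implyP; exact: h.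
Qed.

Lemma lambda_geNP (V : finType) (g : mgraph V) (x y : V) (j : nat) :
  ~ lambda_ge g x y j -> exists S : {set V}, [/\ x \in S, y \notin S & out g S < j].
Proof.
move/lambda_geP/forallPn => [S]; rewrite !negb_imply -ltnNge => /and3P[xS yS ltS].
by exists S.
Qed.

Lemma lambda_ge_refl (V : finType) (g : mgraph V) (x : V) (j : nat) :
  lambda_ge g x x j.
Proof. by move=> S ->. Qed.

Lemma lambda_ge_rev (V : finType) (g : mgraph V) (x y : V) (j : nat) :
  lambda_ge g y x j -> lambda_ge (rev_graph g) x y j.
Proof. by move=> h S xS yS; rewrite out_rev; apply: h; rewrite inE ?xS ?yS. Qed.

Section MinimumOutSet.
Variables (V : finType) (g : mgraph V) (k : nat) (s : V).

Lemma sep_out_setI (v : V) (S T : {set V}) :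
  lambda_ge g v s k.+1 -> sep_out g k s v S -> sep_out g k s v T ->
  sep_out g k s v (S :&: T).
Proof.
move=> lvs /and3P[vS sS /eqP oS] /and3P[vT sT /eqP oT].
have vST : v \in S :&: T by rewrite inE vS vT.
have sST : s \notin S :&: T by rewrite inE (negbTE sS).
have lowI := lvs _ vST sST.
have lowU : k.+1 <= out g (S :|: T) by apply: lvs; rewrite !inE ?vS ?(negbTE sS).
have := out_submod g S T.
by rewrite /sep_out vST sST /= => sub; apply/eqP; lia.
Qed.

Lemma Mset_sub (v : V) (S : {set V}) :
  lambda_ge g v s k.+1 -> sep_out g k s v S ->
  exists2 A, Mset g k s v = Some A & A \subset S.
Proof.
move=> lvs sepS; rewrite /Mset; case: pickP => [A /andP[_ /forallP minA] | noA].
  by exists A => //; have := minA S; rewrite sepS.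
have [A sepA minA] := arg_minnP (fun T : {set V} => #|T|) sepS.
have /negP[] := noA A; rewrite sepA /=; apply/forallP => T; apply/implyP => sepT.
have AT_A : A :&: T = A.
  by apply/eqP; rewrite eqEcard subsetIl minA // sep_out_setI.
by rewrite -AT_A subsetIr.
Qed.

Lemma Mset_mem (v : V) (A : {set V}) : Mset g k s v = Some A -> v \in A.
Proof. by rewrite /Mset; case: pickP => // B /andP[/and3P[vB _ _] _] [<-]. Qed.

Lemma Mset_neq (u w : V) (S : {set V}) :
  lambda_ge g u s k.+1 -> u \in S -> w \notin S -> s \notin S -> out g S = k.+1 ->
  Mset g k s u <> Mset g k s w.
Proof.
move=> lus uS wS sS oS.
have [|A ->] := @Mset_sub u S lus; first by rewrite /sep_out uS sS oS eqxx.
by move=> /subsetP AS /esym/Mset_mem/AS; apply/negP.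
Qed.

End MinimumOutSet.

Lemma Mset_or_MRset_neq (V : finType) (g : mgraph V) (k : nat) (s a b : V)
    (S : {set V}) :
  lambda_ge g a s k.+1 -> lambda_ge g s b k.+1 ->
  a \in S -> b \notin S -> out g S = k.+1 ->
  Mset g k s a <> Mset g k s b \/ MRset g k s a <> MRset g k s b.
Proof.
move=> las lsb aS bS oS; have [sS|sS] := boolP (s \in S); last first.
  by left; apply: Mset_neq sS oS.
right; move/esym; apply: (Mset_neq (S := ~: S)).
- exact: lambda_ge_rev.
- by rewrite inE.
- by rewrite inE aS.
- by rewrite inE sS.
- by rewrite out_rev setCK.
Qed.

Theorem mainTheorem3 (V : finType) (g : mgraph V) (ord : {set V}) (k : nat)
  (s u w : V) :
  strongly_connected g ->
  (forall x y, x \in ord -> y \in ord -> x != y -> edge_conn g k.+1 x y) ->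
  s \in ord -> u \in ord -> w \in ord ->
  ~ edge_conn g k.+2 u w ->
  Mset g k s u <> Mset g k s w \/ MRset g k s u <> MRset g k s w.
Proof.
move=> _ conn hs hu hw not_conn.
have lam x y : x \in ord -> y \in ord -> lambda_ge g x y k.+1.
  move=> hx hy; have [->|xy] := eqVneq x y; first exact: lambda_ge_refl.
  by case: (conn x y hx hy xy).
wlog nuw : u w hu hw not_conn / ~ lambda_ge g u w k.+2.
  move=> wlog_uw; have [luw|] := lambda_geP g u w k.+2; last exact: wlog_uw.
  have nwu : ~ lambda_ge g w u k.+2 by move=> lwu; apply: not_conn.
  have not_conn' : ~ edge_conn g k.+2 w u by case.
  by case: (wlog_uw w u) => // neq; [left|right] => /esym.
have [S [uS wS ltS]] := lambda_geNP nuw.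
have oS : out g S = k.+1 by apply/eqP; rewrite eqn_leq -ltnS ltS (lam u w).
exact: Mset_or_MRset_neq (lam u s hu hs) (lam s w hs hw) uS wS oS.
Qed.
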